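(* Let $\Gamma=(V,E)$ be a graph of order $n$, minimum degree $\delta$ and maximum degree $\Delta$, and let $\bar{\Gamma}=(V,\bar E)$ be its complement. Let $k$ be an integer. (a) Every dominating set $S\subseteq V$ in $\bar{\Gamma}$ with $|S|\ge\left\lceil\frac{n+k+\Delta-1}{2}\right\rceil$ is a global offensive $k$-alliance in $\bar{\Gamma}$. (b) Every dominating set $S\subseteq V$ in $\Gamma$ with $|S|\ge\left\lceil\frac{2n+k-\delta-2}{2}\right\rceil$ is a global offensive $k$-alliance in $\Gamma$.
   Context: Graphs are finite and simple. In a graph $G$, for $S\subseteq V$ and $v\in V$, $\delta_S(v)$ is the number of neighbours of $v$ in $S$, $\overline{S}=V\setminus S$, and $\partial(S)$ the set of vertices of $\overline{S}$ with a neighbour in $S$. A nonempty $S$ is an offensive $k$-alliance in $G$ if $\delta_S(v)\ge\delta_{\overline{S}}(v)+k$ for all $v\in\partial(S)$, and a global offensive $k$-alliance if moreover it is dominating in $G$. *)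

From mathcomp Require Import all_boot all_order all_algebra.
Set Implicit Arguments. Unset Strict Implicit. Unset Printing Implicit Defensive.
Import Order.TTheory GRing.Theory Num.Theory.

Definition simple_graph (T : finType) (e : rel T) : Prop :=
  symmetric e /\ irreflexive e.

Definition compl_rel (T : finType) (e : rel T) : rel T :=
  fun x y => (x != y) && ~~ e x y.

Definition ndeg (T : finType) (e : rel T) (S : {set T}) (v : T) : nat :=
  #|[set u in S | e v u]|.

Definition deg (T : finType) (e : rel T) (v : T) : nat := ndeg e [set: T] v.

Definition maxdeg (T : finType) (e : rel T) : nat := \max_(v : T) deg e v.
(* minimum degree; the seed #|T| is never attained strictly below for n > 0 *)
Definition mindeg (T : finType) (e : rel T) : nat :=
  \big[minn/#|T|]_(v : T) deg e v.

Definition boundary (T : finType) (e : rel T) (S : {set T}) : {set T} :=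
  [set v in ~: S | [exists u in S, e v u]].

Definition dominating (T : finType) (e : rel T) (S : {set T}) : Prop :=
  forall v, v \notin S -> exists2 u, u \in S & e v u.

Definition offensive_alliance (T : finType) (e : rel T) (k : int)
  (S : {set T}) : Prop :=
  S != set0 /\
  forall v, v \in boundary e S ->
    ((ndeg e S v)%:Z >= (ndeg e (~: S) v)%:Z + k)%R.

Definition global_offensive_alliance (T : finType) (e : rel T) (k : int)
  (S : {set T}) : Prop :=
  offensive_alliance e k S /\ dominating e S.

(* ceiling of m/2 for an integer m *)
Definition ceil_half (m : int) : int := ((m + 1) %/ 2)%Z.

From mathcomp Require Import all_boot all_order all_algebra zify.
Import Order.TTheory GRing.Theory Num.Theory.
Set Implicit Arguments. Unset Strict Implicit.

(* Let v lie outside a dominating set S of size s in a graph of order n.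
   Every other vertex is adjacent to v either in the graph or in its
   complement, so the complement degrees of v into S and into ~: S are
   s - d_S(v) and n - s - 1 - d_{~S}(v).  The offensive margin
   d_S(v) - d_{~S}(v) is therefore at least 2s - n + 1 - deg v in the
   complement, and at least deg v - 2(n - s - 1) in the graph itself; the two
   lower bounds on s make these margins at least k. *)

Lemma ndeg_sum (T : finType) (e : rel T) (A : {set T}) v :
  ndeg e A v = \sum_(u in A) e v u.
Proof.
rewrite /ndeg -sum1_card big_mkcond [RHS]big_mkcond /=.
by apply: eq_bigr => u _; rewrite !inE; case: (u \in A); case: (e v u).
Qed.

Lemma sum_eq_mem (T : finType) (A : {set T}) v :
  \sum_(u in A) (u == v) = (v \in A : nat).
Proof.
have [vA | vNA] := boolP (v \in A); last first.
  by rewrite big1 // => u uA; apply/eqP; rewrite eqb0; apply: contraNneq vNA => <-.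
rewrite (bigD1 v) //= eqxx big1 // => u /andP [_ /negbTE ->] //.
Qed.

Section Degrees.

Variables (T : finType) (e : rel T).

Lemma ndeg_setC (A : {set T}) v : ndeg e A v + ndeg e (~: A) v = deg e v.
Proof.
rewrite /deg !ndeg_sum [RHS](bigID (mem A)) /=.
by congr (_ + _); apply: eq_bigl => u; rewrite !inE.
Qed.

Lemma ndeg_compl_rel (A : {set T}) v :
  irreflexive e -> ndeg (compl_rel e) A v + ndeg e A v + (v \in A) = #|A|.
Proof.
move=> irr; rewrite -sum_eq_mem !ndeg_sum -!big_split -sum1_card /=.
apply: eq_bigr => u _; rewrite /compl_rel eq_sym.
by case: eqP => [->|_]; [rewrite irr | case: (e v u)].
Qed.

Lemma leq_deg_maxdeg v : deg e v <= maxdeg e.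
Proof. exact: leq_bigmax. Qed.

Lemma geq_deg_mindeg v : mindeg e <= deg e v.
Proof.
rewrite /mindeg; elim: (index_enum T) (mem_index_enum v) => // u r IHr.
rewrite big_cons inE => /predU1P [<- | /IHr]; first exact: geq_minl.
exact: leq_trans (geq_minr _ _).
Qed.

End Degrees.

Definition offensive_margin (T : finType) (e : rel T) (S : {set T}) v : int :=
  ((ndeg e S v)%:Z - (ndeg e (~: S) v)%:Z)%R.

Section Margins.

Variables (T : finType) (e : rel T) (S : {set T}) (v : T).
Hypotheses (irr : irreflexive e) (vNS : v \notin S).

Lemma offensive_margin_ge :
  (2 * #|S|%:Z - 2 * #|T|%:Z + 2 + (deg e v)%:Z <= offensive_margin e S v)%R.
Proof.
have := ndeg_compl_rel (~: S) v irr; have := ndeg_setC e S v.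
rewrite inE vNS /offensive_margin -(cardsC S); lia.
Qed.

Lemma compl_offensive_margin_ge :
  (2 * #|S|%:Z - #|T|%:Z + 1 - (deg e v)%:Z
     <= offensive_margin (compl_rel e) S v)%R.
Proof.
have := ndeg_compl_rel S v irr; have := ndeg_compl_rel (~: S) v irr.
have := ndeg_setC e S v.
rewrite inE (negbTE vNS) /offensive_margin -(cardsC S); lia.
Qed.

End Margins.

Lemma global_offensive_allianceP (T : finType) (e : rel T) (k : int)
    (S : {set T}) :
  0 < #|T| -> dominating e S ->
  (forall v, v \notin S -> (k <= offensive_margin e S v)%R) ->
  global_offensive_alliance e k S.
Proof.
move=> /card_gt0P [x _] domS marginS; do 2!split => //.
  apply/set0Pn; have [xS | xNS] := boolP (x \in S); first by exists x.
  by have [u uS _] := domS x xNS; exists u.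
move=> v; rewrite !inE => /andP [vNS _]; have := marginS v vNS.
rewrite /offensive_margin; lia.
Qed.

Lemma ceil_halfP (m : int) : (m <= 2 * ceil_half m)%R.
Proof.
rewrite /ceil_half; have := divz_eq (m + 1) 2.
have := @modz_ge0 (m + 1) 2 isT; have := @ltz_pmod (m + 1) 2 isT; lia.
Qed.

Theorem mainTheorem10 (T : finType) (e : rel T) (k : int) :
  simple_graph e -> 0 < #|T| ->
  (forall S : {set T}, dominating (compl_rel e) S ->
     ((#|S|%:Z >= ceil_half (#|T|%:Z + k + (maxdeg e)%:Z - 1))%R) ->
     global_offensive_alliance (compl_rel e) k S) /\
  (forall S : {set T}, dominating e S ->
     ((#|S|%:Z >= ceil_half (2 * #|T|%:Z + k - (mindeg e)%:Z - 2))%R) ->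
     global_offensive_alliance e k S).
Proof.
move=> [_ irr] T_gt0; split => S domS sizeS;
  apply: global_offensive_allianceP T_gt0 domS _ => v vNS.
- have := compl_offensive_margin_ge irr vNS; have := leq_deg_maxdeg e v.
  have := ceil_halfP (#|T|%:Z + k + (maxdeg e)%:Z - 1); lia.
- have := offensive_margin_ge irr vNS; have := geq_deg_mindeg e v.
  have := ceil_halfP (2 * #|T|%:Z + k - (mindeg e)%:Z - 2); lia.
Qed.
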